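(* Let $\gamma<0$ and $\epsilon_{\text{abs}}>0$, and let $\hat g_{+,\gamma}\in\arg\min_{f\in\mathcal{F}}\hat h_{+,\gamma}(f)$. If $\hat h_{+,\gamma}(\hat g_{+,\gamma})\ge0$, then $$\left\{\frac{\hat h_{+,\gamma}(\hat g_{+,\gamma})}{\epsilon_{\text{abs}}}-1\right\}\gamma^{-1}\ge\widehat{MR}(f)$$ for all $f\in\mathcal{F}$ with $\hat e_{\text{orig}}(f)\le\epsilon_{\text{abs}}$; moreover $\widehat{MR}(f)\le|\gamma^{-1}|$ for all $f\in\mathcal{F}$. Additionally, if $\hat h_{+,\gamma}(\hat g_{+,\gamma})\ge0$ and $\hat e_{\text{orig}}(\hat g_{+,\gamma})\le\epsilon_{\text{abs}}$ with at least one of these two inequalities holding with equality, then the displayed inequality holds with equality for $f=\hat g_{+,\gamma}$.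
   Context: Setting: $\mathcal{F}$ a set of prediction models, $L\ge0$ a loss, and a fixed observed sample $(\mathbf{y}_{[i]},\mathbf{X}_{1[i]},\mathbf{X}_{2[i]})$, $i=1,\dots,n$, $n\ge2$. $\hat e_{\text{orig}}(f)=\frac1n\sum_iL\{f,(\mathbf{y}_{[i]},\mathbf{X}_{1[i]},\mathbf{X}_{2[i]})\}$; $\hat e_{\text{switch}}(f)=\frac1{n(n-1)}\sum_i\sum_{j\ne i}L\{f,(\mathbf{y}_{[j]},\mathbf{X}_{1[i]},\mathbf{X}_{2[j]})\}$; $\widehat{MR}(f)=\hat e_{\text{switch}}(f)/\hat e_{\text{orig}}(f)$. For $\gamma\in\mathbb{R}$, $\hat h_{+,\gamma}(f):=\hat e_{\text{orig}}(f)+\gamma\hat e_{\text{switch}}(f)$. Standing assumptions: $\min_{f\in\mathcal{F}}\hat e_{\text{orig}}(f)>0$ and minimizers of $\hat h_{+,\gamma}$ over $\mathcal{F}$ exist. *)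

From mathcomp Require Import all_boot all_order all_algebra.
Set Implicit Arguments. Unset Strict Implicit. Unset Printing Implicit Defensive.
Import Order.TTheory GRing.Theory Num.Theory.
Local Open Scope ring_scope.

Section EmpiricalMR.
Variables (R : realFieldType) (M Y X1 X2 : Type) (n : nat).
Variable L : M -> Y * X1 * X2 -> R.
Variables (y : 'I_n -> Y) (x1 : 'I_n -> X1) (x2 : 'I_n -> X2).

Definition e_orig (f : M) : R :=
  (n%:R)^-1 * \sum_(i < n) L f (y i, x1 i, x2 i).

Definition e_switch (f : M) : R :=
  ((n * n.-1)%:R)^-1 *
    \sum_(i < n) \sum_(j < n | j != i) L f (y j, x1 i, x2 j).

Definition MRhat (f : M) : R := e_switch f / e_orig f.

Definition h_plus (gamma : R) (f : M) : R := e_orig f + gamma * e_switch f.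
End EmpiricalMR.

(* Writing e_orig f + gamma * e_switch f = h_plus gamma f and solving for
   e_switch f gives the exact identity MRhat f = (h_plus gamma f / e_orig f - 1) / gamma.
   As gamma < 0 the right-hand side is antitone in h_plus gamma f / e_orig f, so
   replacing h_plus gamma f by its minimum h_plus gamma g, and then e_orig f by any
   larger eps (or h_plus gamma g by 0), can only increase it. *)
From mathcomp Require Import all_boot all_order all_algebra ring.
Set Implicit Arguments.
Unset Strict Implicit.
Unset Printing Implicit Defensive.
Import Order.TTheory GRing.Theory Num.Theory.
Local Open Scope ring_scope.

Lemma ler_subr1_nmul (R : numFieldType) (gamma a b : R) : gamma < 0 ->
  a <= b -> (b - 1) * gamma^-1 <= (a - 1) * gamma^-1.
Proof.
by move=> gamma_lt0 le_ab; apply: ler_wnM2r; [rewrite invr_le0 ltW | rewrite lerD2r].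
Qed.

Section EmpiricalModelReliance.
Variables (R : realFieldType) (M Y X1 X2 : Type) (n : nat).
Variables (L : M -> Y * X1 * X2 -> R).
Variables (y : 'I_n -> Y) (x1 : 'I_n -> X1) (x2 : 'I_n -> X2).

Local Notation e_orig := (e_orig L y x1 x2).
Local Notation MRhat := (MRhat L y x1 x2).
Local Notation h_plus := (h_plus L y x1 x2).

Lemma MRhat_h_plus (gamma : R) (f : M) : gamma != 0 -> e_orig f != 0 ->
  MRhat f = (h_plus gamma f / e_orig f - 1) * gamma^-1.
Proof. by move=> gamma_neq0 eo_neq0; rewrite /MRhat /h_plus; field; apply/andP. Qed.

Lemma MRhat_le_h_plus (gamma : R) (g f : M) : gamma < 0 -> 0 < e_orig f ->
  h_plus gamma g <= h_plus gamma f ->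
  MRhat f <= (h_plus gamma g / e_orig f - 1) * gamma^-1.
Proof.
move=> gamma_lt0 eo_gt0 le_hgf.
rewrite (MRhat_h_plus (gamma := gamma)) ?(lt_eqF gamma_lt0) ?(gt_eqF eo_gt0) //.
by apply: ler_subr1_nmul; rewrite // ler_pM2r ?invr_gt0.
Qed.

End EmpiricalModelReliance.

Theorem lemma19 (R : realFieldType) (M Y X1 X2 : Type) (n : nat)
  (F : M -> Prop) (L : M -> Y * X1 * X2 -> R)
  (y : 'I_n -> Y) (x1 : 'I_n -> X1) (x2 : 'I_n -> X2)
  (Hn : (2 <= n)%N)
  (HL : forall f o, 0 <= L f o)
  (Hmin_orig : exists2 f0, F f0 /\ (forall f, F f -> e_orig L y x1 x2 f0 <= e_orig L y x1 x2 f)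
                          & 0 < e_orig L y x1 x2 f0)
  (gamma eps : R) (Hgamma : gamma < 0) (Heps : 0 < eps)
  (g : M) (HgF : F g)
  (Hg : forall f, F f -> h_plus L y x1 x2 gamma g <= h_plus L y x1 x2 gamma f) :
  (0 <= h_plus L y x1 x2 gamma g ->
     (forall f, F f -> e_orig L y x1 x2 f <= eps ->
        MRhat L y x1 x2 f <= (h_plus L y x1 x2 gamma g / eps - 1) * gamma^-1)
     /\ (forall f, F f -> MRhat L y x1 x2 f <= `|gamma^-1|))
  /\
  (0 <= h_plus L y x1 x2 gamma g -> e_orig L y x1 x2 g <= eps ->
     (h_plus L y x1 x2 gamma g = 0 \/ e_orig L y x1 x2 g = eps) ->
     MRhat L y x1 x2 g = (h_plus L y x1 x2 gamma g / eps - 1) * gamma^-1).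
Proof.
have [f0 [_ f0_min] eo_f0_gt0] := Hmin_orig.
have eo_gt0 f : F f -> 0 < e_orig L y x1 x2 f.
  by move=> Ff; apply: lt_le_trans eo_f0_gt0 (f0_min f Ff).
split=> [hg_ge0|_ _ hg0_or_eps].
  split=> [f Ff eo_le_eps|f Ff]; have eo_f_gt0 := eo_gt0 f Ff;
    apply: le_trans (MRhat_le_h_plus Hgamma eo_f_gt0 (Hg f Ff)) _.
    apply: ler_subr1_nmul => //.
    by apply: ler_wpM2l => //; rewrite lef_pV2 ?posrE.
  apply: le_trans (ler_subr1_nmul (a := 0) Hgamma _) _; first by rewrite divr_ge0 // ltW.
  by rewrite ltr0_norm ?invr_lt0 // sub0r mulN1r.
rewrite (MRhat_h_plus (gamma := gamma)) ?(lt_eqF Hgamma) ?(gt_eqF (eo_gt0 g HgF)) //.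
by case: hg0_or_eps => [->|->]; rewrite ?mul0r.
Qed.
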